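(* Let $2\leq\alpha,\beta\leq\omega$. The class of $(\alpha,\beta)$-representable posets is closed under (arbitrary) products: if $I$ is a set and $P_i$ is an $(\alpha,\beta)$-representable poset for each $i\in I$, then the product $\prod_{i\in I}P_i$ (with the componentwise order) is $(\alpha,\beta)$-representable.
   Context: For posets $P,Q$, a monotone map $h:P\to Q$ is an $(\alpha,\beta)$-morphism if whenever $S\subseteq P$ with $|S|<\alpha$ and $\bigwedge S$ exists in $P$, then $h(\bigwedge S)=\bigwedge h[S]$, and whenever $T\subseteq P$ with $|T|<\beta$ and $\bigvee T$ exists in $P$, then $h(\bigvee T)=\bigvee h[T]$. A poset $P$ is $(\alpha,\beta)$-representable if there is a set $X$ and an $(\alpha,\beta)$-morphism $h:P\to\wp(X)$ that is an order embedding, where $\wp(X)$ is the power set of $X$ ordered by inclusion. *)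

From Stdlib Require Import List FunctionalExtensionality PropExtensionality.
Import ListNotations.

Set Implicit Arguments.

Record Poset := {
  carrier :> Type;
  le : carrier -> carrier -> Prop;
  le_refl : forall x, le x x;
  le_trans : forall x y z, le x y -> le y z -> le x z;
  le_antisym : forall x y, le x y -> le y x -> x = y
}.
Arguments le {p} _ _.

(** Cardinal bounds alpha with alpha <= omega: a natural number or omega. *)
Inductive card_bd := Fin (n : nat) | Omega.

Definition card_lt (n : nat) (a : card_bd) : Prop :=
  match a with Fin m => n < m | Omega => True end.

Definition two_le (a : card_bd) : Prop :=
  match a with Fin m => 2 <= m | Omega => True end.

Definition has_card_lt {T : Type} (S : T -> Prop) (a : card_bd) : Prop :=
  exists l : list T, NoDup l /\ (forall x, S x <-> In x l) /\ card_lt (length l) a.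

Definition is_glb {P : Poset} (S : P -> Prop) (m : P) : Prop :=
  (forall s, S s -> le m s) /\ (forall y, (forall s, S s -> le y s) -> le y m).

Definition is_lub {P : Poset} (S : P -> Prop) (m : P) : Prop :=
  (forall s, S s -> le s m) /\ (forall y, (forall s, S s -> le s y) -> le m y).

Definition image {A B : Type} (h : A -> B) (S : A -> Prop) : B -> Prop :=
  fun b => exists a, S a /\ h a = b.

Definition monotone {P Q : Poset} (h : P -> Q) : Prop :=
  forall x y, le x y -> le (h x) (h y).

(** (alpha,beta)-morphism: monotone, preserves all existing meets of subsets
    of size < alpha and all existing joins of subsets of size < beta.
    "h(/\ S) = /\ h[S]" means h(/\ S) is the meet of h[S] in Q. *)
Definition ab_morphism (alpha beta : card_bd) {P Q : Poset} (h : P -> Q) : Prop :=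
  monotone h /\
  (forall (S : P -> Prop) (m : P), has_card_lt S alpha -> is_glb S m ->
      is_glb (image h S) (h m)) /\
  (forall (T : P -> Prop) (j : P), has_card_lt T beta -> is_lub T j ->
      is_lub (image h T) (h j)).

Definition order_embedding {P Q : Poset} (h : P -> Q) : Prop :=
  forall x y, le x y <-> le (h x) (h y).

Definition subset {X : Type} (A B : X -> Prop) : Prop := forall x, A x -> B x.

Lemma subset_antisym {X : Type} (A B : X -> Prop) :
  subset A B -> subset B A -> A = B.
Proof.
  intros H1 H2. apply functional_extensionality; intro x.
  apply propositional_extensionality; split; auto.
Qed.

Definition powerset (X : Type) : Poset :=
  {| carrier := X -> Prop;
     le := @subset X;
     le_refl := fun A x Hx => Hx;
     le_trans := fun A B C H1 H2 x Hx => H2 x (H1 x Hx);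
     le_antisym := @subset_antisym X |}.

Definition representable (alpha beta : card_bd) (P : Poset) : Prop :=
  exists (X : Type) (h : P -> powerset X),
    ab_morphism alpha beta h /\ order_embedding h.

Definition prod_le {I : Type} (P : I -> Poset) (f g : forall i, P i) : Prop :=
  forall i, le (f i) (g i).

Lemma prod_le_antisym {I : Type} (P : I -> Poset) (f g : forall i, P i) :
  prod_le P f g -> prod_le P g f -> f = g.
Proof.
  intros H1 H2. apply functional_extensionality_dep; intro i.
  apply le_antisym; auto.
Qed.

Definition prod_poset {I : Type} (P : I -> Poset) : Poset :=
  {| carrier := forall i, P i;
     le := prod_le P;
     le_refl := fun f i => le_refl (P i) (f i);
     le_trans := fun f g h H1 H2 i => le_trans (P i) _ _ _ (H1 i) (H2 i);
     le_antisym := @prod_le_antisym I P |}.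

From Stdlib Require Import List Lia FunctionalExtensionality ClassicalEpsilon ProofIrrelevance.

(* Each P_i embeds into ℘(X_i) by an (α,β)-morphism h_i.  Meets and joins in a
   product are computed coordinatewise, so every projection preserves all
   existing meets and joins, and the product map ∏ h_i : ∏ P_i → ∏ ℘(X_i) is
   again an order embedding and an (α,β)-morphism.  Finally ∏ ℘(X_i) is
   order-isomorphic to ℘(Σ_i X_i). *)

Definition dual_poset (P : Poset) : Poset :=
  {| carrier := P;
     le := fun x y => le y x;
     le_refl := le_refl P;
     le_trans := fun x y z Hxy Hyz => le_trans P z y x Hyz Hxy;
     le_antisym := fun x y Hxy Hyx => le_antisym P x y Hyx Hxy |}.

(* Over [dual_poset], [is_glb] unfolds to [is_lub]; so the join half of
   [ab_morphism] is [preserves_glbs] between the dual posets. *)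
Definition preserves_glbs {P Q : Poset} (a : card_bd) (h : P -> Q) : Prop :=
  forall (S : P -> Prop) (m : P), has_card_lt S a -> is_glb S m ->
    is_glb (image h S) (h m).

Lemma image_has_card_lt {A B : Type} (f : A -> B) (S : A -> Prop) (a : card_bd) :
  has_card_lt S a -> has_card_lt (image f S) a.
Proof.
  intros [l [Hnd [HS Hlen]]].
  pose (dec := fun x y : B => excluded_middle_informative (x = y)).
  exists (nodup dec (map f l)). split; [apply NoDup_nodup | split].
  - intro y. rewrite nodup_In, in_map_iff. unfold image.
    split; intros [x [Hx Hfx]]; exists x; split; auto; apply HS; auto.
  - assert (Hle : length (nodup dec (map f l)) <= length l).
    { rewrite <- (length_map f l). apply NoDup_incl_length; [apply NoDup_nodup|].
      intros y Hy. apply nodup_In in Hy. exact Hy. }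
    destruct a; simpl in *; [lia | exact I].
Qed.

Lemma image_comp {A B C : Type} (g : A -> B) (h : B -> C) (S : A -> Prop) :
  image h (image g S) = image (fun x => h (g x)) S.
Proof.
  apply subset_antisym.
  - intros z [y [[x [Hx <-]] <-]]. exists x. auto.
  - intros z [x [Hx <-]]. exists (g x). split; [exists x |]; auto.
Qed.

Lemma preserves_glbs_comp {P Q R : Poset} (a : card_bd) (g : P -> Q) (h : Q -> R) :
  preserves_glbs a g -> preserves_glbs a h -> preserves_glbs a (fun x => h (g x)).
Proof.
  intros Hg Hh S m HS Hm. rewrite <- image_comp.
  apply Hh; [apply image_has_card_lt, HS | apply Hg; assumption].
Qed.

Lemma ab_morphism_comp {P Q R : Poset} (alpha beta : card_bd) (g : P -> Q) (h : Q -> R) :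
  ab_morphism alpha beta g -> ab_morphism alpha beta h ->
  ab_morphism alpha beta (fun x => h (g x)).
Proof.
  intros [Mg [Gg Lg]] [Mh [Gh Lh]]. split; [|split].
  - intros x y Hxy. apply Mh, Mg, Hxy.
  - exact (preserves_glbs_comp alpha g h Gg Gh).
  - exact (preserves_glbs_comp (P := dual_poset P) (Q := dual_poset Q)
             (R := dual_poset R) beta g h Lg Lh).
Qed.

Lemma order_embedding_comp {P Q R : Poset} (g : P -> Q) (h : Q -> R) :
  order_embedding g -> order_embedding h -> order_embedding (fun x => h (g x)).
Proof. intros Hg Hh x y. split; intro H; [apply Hh, Hg, H | apply Hg, Hh, H]. Qed.

Lemma order_embedding_dual {P Q : Poset} (e : P -> Q) :
  order_embedding e -> order_embedding (P := dual_poset P) (Q := dual_poset Q) e.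
Proof. intros He x y. apply He. Qed.

Lemma surjective_embedding_preserves_glbs {P Q : Poset} (e : P -> Q)
    (S : P -> Prop) (m : P) :
  order_embedding e -> (forall y, exists x, e x = y) ->
  is_glb S m -> is_glb (image e S) (e m).
Proof.
  intros He Hsurj [Hlow Hgreat]. split.
  - intros y [s [Hs <-]]. apply He, Hlow, Hs.
  - intros y Hy. destruct (Hsurj y) as [x <-]. apply He, Hgreat.
    intros s Hs. apply He, Hy. exists s. auto.
Qed.

Lemma ab_morphism_surjective_embedding {P Q : Poset} (alpha beta : card_bd) (e : P -> Q) :
  order_embedding e -> (forall y, exists x, e x = y) -> ab_morphism alpha beta e.
Proof.
  intros He Hsurj. split; [|split].
  - intros x y. apply He.
  - intros S m _. apply surjective_embedding_preserves_glbs; assumption.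
  - intros S m _. apply (surjective_embedding_preserves_glbs (P := dual_poset P)
      (Q := dual_poset Q)); [apply order_embedding_dual |]; assumption.
Qed.

Section Products.

Context {I : Type}.

Definition update {A : I -> Type} (f : forall j, A j) (i : I) (y : A i) :
  forall j, A j :=
  fun j => match excluded_middle_informative (i = j) with
           | left e => eq_rect i A y j e
           | right _ => f j
           end.

Lemma update_eq {A : I -> Type} (f : forall j, A j) (i : I) (y : A i) :
  update f i y i = y.
Proof.
  unfold update. destruct (excluded_middle_informative (i = i)) as [e | n].
  - rewrite (proof_irrelevance _ e eq_refl). reflexivity.
  - contradiction.
Qed.

Lemma update_neq {A : I -> Type} (f : forall j, A j) (i j : I) (y : A i) :
  j <> i -> update f i y j = f j.
Proof.
  intro Hji. unfold update.
  destruct (excluded_middle_informative (i = j)) as [e | n]; [congruence | reflexivity].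
Qed.

(* To bound [y] by [m i], bound [update m i y] by [m]. *)
Lemma proj_preserves_glb (P : I -> Poset) (i : I) (S : prod_poset P -> Prop)
    (m : prod_poset P) :
  is_glb S m -> is_glb (image (fun f : prod_poset P => f i) S) (m i).
Proof.
  intros [Hlow Hgreat]. split.
  - intros x [s [Hs <-]]. apply Hlow, Hs.
  - intros y Hy. rewrite <- (update_eq m i y).
    apply (Hgreat (update m i y)). intros s Hs j.
    destruct (excluded_middle_informative (j = i)) as [-> | Hji].
    + simpl. rewrite update_eq. apply Hy. exists s. auto.
    + simpl. rewrite (update_neq m i j y Hji). apply Hlow, Hs.
Qed.

Lemma ab_morphism_proj (alpha beta : card_bd) (P : I -> Poset) (i : I) :
  ab_morphism alpha beta (fun f : prod_poset P => f i).
Proof.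
  split; [|split].
  - intros f g Hfg. apply Hfg.
  - intros S m _. apply proj_preserves_glb.
  - intros S m _. apply (proj_preserves_glb (fun j => dual_poset (P j))).
Qed.

Lemma tuple_preserves_glbs {P : Poset} (Q : I -> Poset) (a : card_bd)
    (g : forall i, P -> Q i) :
  (forall i, preserves_glbs a (g i)) ->
  preserves_glbs a (fun x => (fun i => g i x) : prod_poset Q).
Proof.
  intros Hg S m HS Hm. split.
  - intros y [s [Hs <-]] i. apply (Hg i S m HS Hm). exists s. auto.
  - intros y Hy i. apply (Hg i S m HS Hm).
    intros z [s [Hs <-]]. apply (Hy (fun i => g i s)). exists s. auto.
Qed.

Lemma ab_morphism_tuple {P : Poset} (Q : I -> Poset) (alpha beta : card_bd)
    (g : forall i, P -> Q i) :
  (forall i, ab_morphism alpha beta (g i)) ->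
  ab_morphism alpha beta (fun x => (fun i => g i x) : prod_poset Q).
Proof.
  intros Hg. split; [|split].
  - intros x y Hxy i. apply (proj1 (Hg i)), Hxy.
  - apply tuple_preserves_glbs. intro i. exact (proj1 (proj2 (Hg i))).
  - apply (tuple_preserves_glbs (P := dual_poset P) (fun i => dual_poset (Q i))).
    intro i. exact (proj2 (proj2 (Hg i))).
Qed.

Definition prod_map {P Q : I -> Poset} (h : forall i, P i -> Q i) :
  prod_poset P -> prod_poset Q :=
  fun f i => h i (f i).

Lemma ab_morphism_prod_map {P Q : I -> Poset} (alpha beta : card_bd)
    (h : forall i, P i -> Q i) :
  (forall i, ab_morphism alpha beta (h i)) -> ab_morphism alpha beta (prod_map h).
Proof.
  intros Hh. apply ab_morphism_tuple with (g := fun i (f : prod_poset P) => h i (f i)).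
  intro i. apply ab_morphism_comp with (g := fun f : prod_poset P => f i);
    [apply ab_morphism_proj | apply Hh].
Qed.

Lemma order_embedding_prod_map {P Q : I -> Poset} (h : forall i, P i -> Q i) :
  (forall i, order_embedding (h i)) -> order_embedding (prod_map h).
Proof. intros Hh f g. split; intros Hfg i; apply Hh, Hfg. Qed.

Definition sigma_uncurry (X : I -> Type) :
  prod_poset (fun i => powerset (X i)) -> powerset (sigT X) :=
  fun F p => F (projT1 p) (projT2 p).

Lemma order_embedding_sigma_uncurry (X : I -> Type) :
  order_embedding (sigma_uncurry X).
Proof.
  intros F G. split.
  - intros HFG [i x]. apply HFG.
  - intros HFG i x. apply (HFG (existT X i x)).
Qed.

Lemma sigma_uncurry_surjective (X : I -> Type) (A : powerset (sigT X)) :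
  exists F, sigma_uncurry X F = A.
Proof.
  exists (fun i x => A (existT X i x)).
  apply functional_extensionality. intros [i x]. reflexivity.
Qed.

Lemma representations_choice {alpha beta : card_bd} {P : I -> Poset} :
  (forall i, representable alpha beta (P i)) ->
  exists (X : I -> Type) (h : forall i, P i -> powerset (X i)),
    forall i, ab_morphism alpha beta (h i) /\ order_embedding (h i).
Proof.
  intros HP.
  pose (rep := fun i => constructive_indefinite_description _ (HP i)).
  pose (emb := fun i => constructive_indefinite_description _ (proj2_sig (rep i))).
  exists (fun i => proj1_sig (rep i)), (fun i => proj1_sig (emb i)).
  intro i. exact (proj2_sig (emb i)).
Qed.

End Products.

Theorem proposition2p5 (alpha beta : card_bd) (Halpha : two_le alpha) (Hbeta : two_le beta)
  (I : Type) (P : I -> Poset) (HP : forall i, representable alpha beta (P i)) :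
  representable alpha beta (prod_poset P).
Proof.
  destruct (representations_choice HP) as [X [h Hh]].
  exists (sigT X), (fun f => sigma_uncurry X (prod_map h f)). split.
  - apply ab_morphism_comp.
    + apply ab_morphism_prod_map. intro i. apply Hh.
    + apply ab_morphism_surjective_embedding;
        [apply order_embedding_sigma_uncurry | apply sigma_uncurry_surjective].
  - apply order_embedding_comp.
    + apply order_embedding_prod_map. intro i. apply Hh.
    + apply order_embedding_sigma_uncurry.
Qed.
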